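(* Let $\mathcal C$ be a pointed category with finite coproducts, $X,Y\in\mathcal C$, $A$ an abelian group, and $\varphi\colon\mathcal C(X,Y)\to A$ a function with $\varphi(0)=0$. Let $\bar\varphi\colon U_X(Y)\to A$ be its $\mathbb Z$-linear extension. Then $\varphi$ is quadratic if and only if $\bar\varphi$ factors through $t_2\colon U_X(Y)\to T_2U_X(Y)$.
   Context: Notation. $\vee$ is the coproduct, $r_1,r_2\colon Y\vee Y\to Y$ are the retractions, and $\nabla$ is the folding map. Functors. - $U_X\colon\mathcal C\to Ab$, $U_X(Z)=\mathbb Z[\mathcal C(X,Z)]/\mathbb Z\cdot0$, functorial by postcomposition. - For a reduced functor $F$: $cr_2F(Y,Y)=\ker(F(Y\vee Y)\to F(Y)\oplus F(Y))$, and $cr_3F(Y,Y,Y)=cr_2(cr_2F(-,Y))(Y,Y)$. - $T_2F(Y)=\mathrm{coker}(cr_3F(Y,Y,Y)\subseteq F(Y^{\vee3})\xrightarrow{F(\nabla^3)}F(Y))$, with projection $t_2$. - For a bireduced bifunctor $B$, $T_{11}B$ is the quotient of $B(Y,Y)$ by the images of $cr_2(B(-,Y))(Y,Y)$ under $B(\nabla,1)$ and of $cr_2(B(Y,-))(Y,Y)$ under $B(1,\nabla)$; $t_{11}$ is the projection. Quadratic maps. - The cross-effect $cr_2(\varphi)\colon cr_2U_X(Y,Y)\to A$ is the restriction to $cr_2U_X(Y,Y)\subseteq U_X(Y\vee Y)$ of the homomorphism determined by $\xi\mapsto\varphi(\nabla\xi)-\varphi(r_1\xi)-\varphi(r_2\xi)$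 for $\xi\in\mathcal C(X,Y\vee Y)$. - $\varphi$ is called quadratic if $cr_2(\varphi)$ factors through $t_{11}\colon cr_2U_X(Y,Y)\to T_{11}(cr_2U_X)(Y,Y)$. *)

From HB Require Import structures.
From mathcomp Require Import all_boot all_order all_algebra.
From mathcomp Require Import freeg.

Set Implicit Arguments.
Unset Strict Implicit.
Unset Printing Implicit Defensive.

Import Order.TTheory GRing.Theory Num.Theory.
Local Open Scope ring_scope.

(* The empty coproduct is the initial object, which in a pointed       *)
(* category is the zero object.  Hom-sets carry a choiceType structure *)
(* (harmless classically), needed to form free abelian groups on them. *)
Record PCCat := {
  obj :> Type;
  mor : obj -> obj -> choiceType;
  comp : forall X Y Z : obj, mor Y Z -> mor X Y -> mor X Z;
  idm : forall X : obj, mor X X;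
  compA : forall (X Y Z W : obj) (h : mor Z W) (g : mor Y Z) (f : mor X Y),
      comp h (comp g f) = comp (comp h g) f;
  comp1f : forall (X Y : obj) (f : mor X Y), comp (idm Y) f = f;
  compf1 : forall (X Y : obj) (f : mor X Y), comp f (idm X) = f;
  zobj : obj;
  from_z : forall X : obj, mor zobj X;
  to_z : forall X : obj, mor X zobj;
  from_z_uniq : forall (X : obj) (f : mor zobj X), f = from_z X;
  to_z_uniq : forall (X : obj) (f : mor X zobj), f = to_z X;
  coprod : obj -> obj -> obj;
  inl : forall X Y : obj, mor X (coprod X Y);
  inr : forall X Y : obj, mor Y (coprod X Y);
  copair : forall X Y Z : obj, mor X Z -> mor Y Z -> mor (coprod X Y) Z;
  copair_inl : forall (X Y Z : obj) (f : mor X Z) (g : mor Y Z),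
      comp (copair f g) (inl X Y) = f;
  copair_inr : forall (X Y Z : obj) (f : mor X Z) (g : mor Y Z),
      comp (copair f g) (inr X Y) = g;
  copair_uniq : forall (X Y Z : obj) (f : mor X Z) (g : mor Y Z)
      (h : mor (coprod X Y) Z),
      comp h (inl X Y) = f -> comp h (inr X Y) = g -> h = copair f g
}.

Arguments mor {_}.
Arguments comp {_ X Y Z}.
Arguments idm {_}.
Arguments coprod {_}.
Arguments inl {_}.
Arguments inr {_}.
Arguments copair {_ X Y Z}.

Section Cat.
Variable C : PCCat.

Definition zmor (X Z : C) : mor X Z := comp (from_z Z) (to_z X).

Definition cmap (X X' Y Y' : C) (f : mor X X') (g : mor Y Y')
  : mor (coprod X Y) (coprod X' Y') :=
  copair (comp (inl X' Y') f) (comp (inr X' Y') g).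

Definition r1 (X Y : C) : mor (coprod X Y) X := copair (idm X) (zmor Y X).
Definition r2 (X Y : C) : mor (coprod X Y) Y := copair (zmor X Y) (idm Y).

Definition fold2 (Y : C) : mor (coprod Y Y) Y := copair (idm Y) (idm Y).
Definition fold3 (Y : C) : mor (coprod (coprod Y Y) Y) Y :=
  copair (fold2 Y) (idm Y).

(* The functor U_X.  U_X(Z) = Z[C(X,Z)] / Z.0 ; we represent it by     *)
(* the free abelian group {freeg mor X Z} together with equality       *)
(* modulo the subgroup Z.<<0>>.                                        *)
Variable X : C.

Definition FU (Z : C) := {freeg (mor X Z) / int}.

Definition eqU (Z : C) (u v : FU Z) : Prop :=
  exists k : int, u - v = << k *g zmor X Z >>.

Definition Umap (Z W : C) (f : mor Z W) (u : FU Z) : FU W :=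
  fglift (fun h : mor X Z => << comp f h >> : FU W) u.

(* cr_2 U_X(Z1,Z2) = ker(U(Z1 \/ Z2) -> U(Z1) (+) U(Z2)) *)
Definition cr2U (Z1 Z2 : C) (u : FU (coprod Z1 Z2)) : Prop :=
  eqU (Umap (r1 Z1 Z2) u) 0 /\ eqU (Umap (r2 Z1 Z2) u) 0.

(* cr_3 U_X(Y,Y,Y) = cr_2 (cr_2 U_X(-,Y)) (Y,Y), inside U_X((Y\/Y)\/Y):
   u lies in cr_2U_X(Y\/Y, Y), and both images under
   cr_2U_X(r_i, 1) = U_X(r_i \/ 1) vanish. *)
Definition cr3U (Y : C) (u : FU (coprod (coprod Y Y) Y)) : Prop :=
  cr2U u /\
  eqU (Umap (cmap (r1 Y Y) (idm Y)) u) 0 /\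
  eqU (Umap (cmap (r2 Y Y) (idm Y)) u) 0.

(* cr_2 (B(Y,-))(Y,Y) for B = cr_2 U_X, inside U_X(Y \/ (Y\/Y)) *)
Definition cr3U' (Y : C) (u : FU (coprod Y (coprod Y Y))) : Prop :=
  cr2U u /\
  eqU (Umap (cmap (idm Y) (r1 Y Y)) u) 0 /\
  eqU (Umap (cmap (idm Y) (r2 Y Y)) u) 0.

(* ker t_2 in U_X(Y): image of cr_3U_X(Y,Y,Y) under U_X(nabla^3) *)
Definition ker_t2 (Y : C) (v : FU Y) : Prop :=
  exists u, cr3U u /\ eqU v (Umap (fold3 Y) u).

(* ker t_11 in cr_2U_X(Y,Y): the subgroup generated by the images of
   cr_2(B(-,Y))(Y,Y) under B(nabla,1) and of cr_2(B(Y,-))(Y,Y) under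
   B(1,nabla) (a sum of two subgroups). *)
Definition ker_t11 (Y : C) (v : FU (coprod Y Y)) : Prop :=
  exists u u', cr3U u /\ cr3U' u' /\
    eqU v (Umap (cmap (fold2 Y) (idm Y)) u + Umap (cmap (idm Y) (fold2 Y)) u').

(* A map f defined on (a subgroup of) U, well defined on U, factors
   through the projection onto the quotient by the subgroup K iff it is
   constant on K-cosets. *)
Definition factors_through (Z : C) (P : FU Z -> Prop) (K : FU Z -> Prop)
  (A : Type) (f : FU Z -> A) : Prop :=
  forall u v, P u -> P v -> K (u - v) -> f u = f v.

Variables (Y : C) (A : zmodType) (phi : mor X Y -> A).

Definition phibar (u : FU Y) : A :=
  \sum_(h <- dom u) phi h *~ coeff h u.

Definition cr2phi_pre (xi : mor X (coprod Y Y)) : A :=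
  phi (comp (fold2 Y) xi) - phi (comp (r1 Y Y) xi) - phi (comp (r2 Y Y) xi).

Definition cr2phi (u : FU (coprod Y Y)) : A :=
  \sum_(h <- dom u) cr2phi_pre h *~ coeff h u.

Definition quadratic : Prop :=
  factors_through (@cr2U Y Y) (@ker_t11 Y) cr2phi.

End Cat.

From Pilot Require Import Defs.
From HB Require Import structures.
From mathcomp Require Import all_boot all_order all_algebra.
From mathcomp Require Import freeg.

Set Implicit Arguments.
Unset Strict Implicit.
Unset Printing Implicit Defensive.

Import Order.TTheory GRing.Theory Num.Theory.
Local Open Scope ring_scope.

(* Both sides say that phibar vanishes on U_X(nabla^3)(cr_3 U_X(Y,Y,Y)).
   On cr_2 U_X(Y,Y) the cross-effect cr_2(phi) is phibar o U_X(nabla), since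
   phibar o U_X(r_i) vanishes there when phi(0) = 0.  Moreover
   nabla o (nabla \/ 1) = nabla^3 and nabla o (1 \/ nabla) = nabla^3 o alpha,
   where the associativity isomorphism alpha carries cr_2(B(Y,-))(Y,Y) into
   cr_3 U_X(Y,Y,Y); so U_X(nabla) maps ker t_11 onto ker t_2. *)

Section ZLinearExtension.
Variables (K : choiceType) (A : zmodType).

Definition fglin (psi : K -> A) (u : {freeg K / int}) : A :=
  \sum_(h <- dom u) psi h *~ coeff h u.

Lemma fglinE psi (s : seq K) u : uniq s -> {subset dom u <= s} ->
  fglin psi u = \sum_(h <- s) psi h *~ coeff h u.
Proof.
move=> s_uniq dom_sub.
rewrite (bigID (mem (dom u))) /= [X in _ + X]big1 ?addr0; last first.
  by move=> h /negbTE h_out; rewrite coeff_outdom ?h_out // mulr0z.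
rewrite -big_filter; apply: perm_big; apply: uniq_perm.
- exact: uniq_dom.
- exact: filter_uniq.
by move=> h; rewrite mem_filter; case: (boolP (h \in dom u)) => // /dom_sub ->.
Qed.

Lemma fglin_is_zmod_morphism psi : zmod_morphism (fglin psi).
Proof.
move=> u v; set s := undup (dom u ++ dom v ++ dom (u - v)).
have s_uniq : uniq s by apply: undup_uniq.
have [su sv suv] : [/\ {subset dom u <= s}, {subset dom v <= s}
                     & {subset dom (u - v) <= s}].
  by split=> h h_in; rewrite mem_undup !mem_cat h_in ?orbT.
rewrite !(fglinE psi s_uniq) // -sumrB.
by apply: eq_bigr => h _; rewrite coeffB mulrzBr.
Qed.

HB.instance Definition _ psi :=
  GRing.isZmodMorphism.Build {freeg K / int} A (fglin psi)
    (fglin_is_zmod_morphism psi).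

Lemma fglinU psi c x : fglin psi << c *g x >> = psi x *~ c.
Proof.
have [->|c_neq0] := eqVneq c 0; first by rewrite freegU0 raddf0 mulr0z.
by rewrite /fglin domU // big_seq1 coeffU eqxx mulr1.
Qed.

Lemma fglinBf (p q : K -> A) u :
  fglin (fun h => p h - q h) u = fglin p u - fglin q u.
Proof. by rewrite /fglin -sumrB; apply: eq_bigr => h _; rewrite mulrzBl. Qed.

End ZLinearExtension.

Section CoproductCalculus.
Variable C : PCCat.
Implicit Types X Y Z W : C.

Lemma comp_copair X Y Z W (h : mor Z W) (f : mor X Z) (g : mor Y Z) :
  Defs.comp h (copair f g) = copair (Defs.comp h f) (Defs.comp h g).
Proof. by apply: copair_uniq; rewrite -Defs.compA ?copair_inl ?copair_inr. Qed.

Lemma copair_eta X Y : copair (inl X Y) (inr X Y) = idm (coprod X Y).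
Proof. by symmetry; apply: copair_uniq; rewrite comp1f. Qed.

Lemma comp_zmor X Z W (f : mor Z W) : Defs.comp f (zmor X Z) = zmor X W.
Proof. by rewrite /zmor Defs.compA [Defs.comp f _]from_z_uniq. Qed.

Lemma comp_from_z Z W (f : mor Z W) : Defs.comp f (from_z Z) = from_z W.
Proof. exact: from_z_uniq. Qed.

Lemma comp_zmorl X Z W (g : mor X Z) (f : mor (zobj C) W) :
  Defs.comp (Defs.comp f (to_z Z)) g = Defs.comp f (to_z X).
Proof. by rewrite -Defs.compA [Defs.comp _ g]to_z_uniq. Qed.

Definition coprodA X Y Z :
    mor (coprod X (coprod Y Z)) (coprod (coprod X Y) Z) :=
  copair (Defs.comp (inl _ Z) (inl X Y))
         (copair (Defs.comp (inl _ Z) (inr X Y)) (inr _ Z)).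

(* Unfolds everything into copairs of composites of injections and zero maps,
   and normalizes; each identity below is then a syntactic equality. *)
Local Ltac coprod_norm :=
  rewrite /cmap /fold3 /fold2 /coprodA /r1 /r2 /zmor;
  do 3 rewrite ?comp_copair ?Defs.compA ?copair_inl ?copair_inr ?comp1f ?compf1
    ?comp_from_z ?comp_zmorl ?copair_eta.

Lemma r1_cmap X Y Z W (f : mor X Z) (g : mor Y W) :
  Defs.comp (r1 Z W) (cmap f g) = Defs.comp f (r1 X Y).
Proof. by coprod_norm. Qed.

Lemma r2_cmap X Y Z W (f : mor X Z) (g : mor Y W) :
  Defs.comp (r2 Z W) (cmap f g) = Defs.comp g (r2 X Y).
Proof. by coprod_norm. Qed.

Lemma fold2_cmap_fold2l Y :
  Defs.comp (fold2 Y) (cmap (fold2 Y) (idm Y)) = fold3 Y.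
Proof. by coprod_norm. Qed.

Lemma fold2_cmap_fold2r Y :
  Defs.comp (fold2 Y) (cmap (idm Y) (fold2 Y))
  = Defs.comp (fold3 Y) (coprodA Y Y Y).
Proof. by coprod_norm. Qed.

Lemma r1_coprodA X Y Z :
  Defs.comp (r1 (coprod X Y) Z) (coprodA X Y Z) = cmap (idm X) (r1 Y Z).
Proof. by coprod_norm. Qed.

Lemma r2_coprodA X Y Z :
  Defs.comp (r2 (coprod X Y) Z) (coprodA X Y Z)
  = Defs.comp (r2 Y Z) (r2 X (coprod Y Z)).
Proof. by coprod_norm. Qed.

Lemma cmap_r1_coprodA X Y Z :
  Defs.comp (cmap (r1 X Y) (idm Z)) (coprodA X Y Z) = cmap (idm X) (r2 Y Z).
Proof. by coprod_norm. Qed.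

Lemma cmap_r2_coprodA X Y Z :
  Defs.comp (cmap (r2 X Y) (idm Z)) (coprodA X Y Z) = r2 X (coprod Y Z).
Proof. by coprod_norm. Qed.

End CoproductCalculus.

Section FunctorU.
Variables (C : PCCat) (X : C).
Implicit Types Y Z W : C.

HB.instance Definition _ Z W (f : mor Z W) :=
  GRing.isZmodMorphism.Build (FU X Z) (FU X W) (Umap f) (lift_is_additive _).

Lemma UmapU Z W (f : mor Z W) c (h : mor X Z) :
  Umap f << c *g h >> = << c *g Defs.comp f h >>.
Proof.
rewrite /Umap liftU; apply/eqP/freeg_eqP => g.
by rewrite coeffZ !coeffU mul1r.
Qed.

Lemma Umap_comp Z W V (f : mor Z W) (g : mor W V) (u : FU X Z) :
  Umap g (Umap f u) = Umap (Defs.comp g f) u.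
Proof.
elim/freeg_ind_dom0: u => [|c h u _ _ IHu]; first by rewrite !raddf0.
by rewrite !raddfD /= IHu !UmapU Defs.compA.
Qed.

Lemma fglin_Umap Z W (A : zmodType) (psi : mor X W -> A) (f : mor Z W)
    (u : FU X Z) :
  fglin psi (Umap f u) = fglin (fun h => psi (Defs.comp f h)) u.
Proof.
elim/freeg_ind_dom0: u => [|c h u _ _ IHu]; first by rewrite !raddf0.
by rewrite !raddfD /= IHu UmapU !fglinU.
Qed.

Lemma eqUU Z (u : FU X Z) : eqU u u.
Proof. by exists 0; rewrite subrr freegU0. Qed.

Lemma eqU_Umap Z W (f : mor Z W) (u v : FU X Z) :
  eqU u v -> eqU (Umap f u) (Umap f v).
Proof. by case=> k e; exists k; rewrite -raddfB /= e UmapU comp_zmor. Qed.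

Lemma eqU_fglin Z (A : zmodType) (psi : mor X Z -> A) (u v : FU X Z) :
  psi (zmor X Z) = 0 -> eqU u v -> fglin psi u = fglin psi v.
Proof.
move=> psi0 [k e]; apply/eqP.
by rewrite -subr_eq0 -raddfB /= e fglinU psi0 mul0rz.
Qed.

Lemma cr2U0 Z1 Z2 : cr2U (0 : FU X (coprod Z1 Z2)).
Proof. by split; rewrite raddf0; apply: eqUU. Qed.

Lemma cr3U'0 Y : cr3U' (0 : FU X (coprod Y (coprod Y Y))).
Proof. by split; [apply: cr2U0 | split]; rewrite raddf0; apply: eqUU. Qed.

Lemma cr2U_cmap Z1 Z2 W1 W2 (f : mor Z1 W1) (g : mor Z2 W2)
    (u : FU X (coprod Z1 Z2)) :
  cr2U u -> cr2U (Umap (cmap f g) u).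
Proof.
case=> u_r1 u_r2; split; rewrite Umap_comp ?r1_cmap ?r2_cmap -Umap_comp.
- by rewrite -(raddf0 (Umap f)); apply: eqU_Umap.
- by rewrite -(raddf0 (Umap g)); apply: eqU_Umap.
Qed.

Lemma cr3U_coprodA Y (u : FU X (coprod Y (coprod Y Y))) :
  cr3U' u -> cr3U (Umap (coprodA Y Y Y) u).
Proof.
case=> -[u_r1 u_r2] [u_1r1 u_1r2].
rewrite /cr3U /cr2U !Umap_comp r1_coprodA r2_coprodA cmap_r1_coprodA.
rewrite cmap_r2_coprodA -Umap_comp.
by split; [split=> //; rewrite -(raddf0 (Umap (r2 Y Y))); apply: eqU_Umap|].
Qed.

End FunctorU.

Section QuadraticMaps.
Variables (C : PCCat) (X Y : C) (A : zmodType) (phi : mor X Y -> A).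
Hypothesis phi0 : phi (zmor X Y) = 0.

Lemma phibarE : phibar phi = fglin phi.
Proof. by []. Qed.

Lemma cr2phiE : cr2phi phi = fglin (cr2phi_pre phi).
Proof. by []. Qed.

Lemma cr2phi_fold2 (w : FU X (coprod Y Y)) :
  cr2U w -> cr2phi phi w = phibar phi (Umap (fold2 Y) w).
Proof.
case=> w_r1 w_r2; rewrite cr2phiE phibarE /cr2phi_pre !fglinBf -!fglin_Umap.
by rewrite (eqU_fglin phi0 w_r1) (eqU_fglin phi0 w_r2) raddf0 !subr0.
Qed.

Lemma phibar_factors_t2P :
  factors_through (fun _ : FU X Y => True) (@ker_t2 C X Y) (phibar phi) <->
  (forall c, cr3U c -> phibar phi (Umap (fold3 Y) c) = 0).
Proof.
split=> [phibar_t2 c c_cr3 | phibar_cr3 u v _ _ [c [c_cr3 uv_c]]].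
  rewrite (phibar_t2 _ 0) // ?phibarE ?raddf0 //.
  by exists c; split; rewrite ?subr0 ?addr0 //; apply: eqUU.
apply/eqP; rewrite -subr_eq0 phibarE -raddfB /= (eqU_fglin phi0 uv_c).
by rewrite -phibarE phibar_cr3.
Qed.

Lemma quadraticP :
  quadratic phi <-> (forall c, cr3U c -> phibar phi (Umap (fold3 Y) c) = 0).
Proof.
split=> [quad c [c_cr2 c_cr3] | phibar_cr3 u v u_cr2 v_cr2].
  pose w := Umap (cmap (fold2 Y) (idm Y)) c.
  have w_cr2 : cr2U w by apply: cr2U_cmap.
  have w_t11 : ker_t11 (w - 0).
    exists c, 0; split; first by split.
    split; first exact: cr3U'0.
    by rewrite !raddf0 !addr0; apply: eqUU.
  have := quad w 0 w_cr2 (cr2U0 _ _ _) w_t11.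
  rewrite (cr2phi_fold2 w_cr2) (cr2phi_fold2 (cr2U0 _ _ _)).
  by rewrite /w Umap_comp fold2_cmap_fold2l => ->; rewrite phibarE !raddf0.
case=> [a [b [a_cr3 [b_cr3' uv_ab]]]].
apply/eqP; rewrite !cr2phi_fold2 // -subr_eq0 phibarE -!raddfB /=.
rewrite (eqU_fglin phi0 (eqU_Umap (fold2 Y) uv_ab)) !raddfD /= !Umap_comp.
rewrite fold2_cmap_fold2l fold2_cmap_fold2r -Umap_comp -phibarE.
by rewrite phibar_cr3 // phibar_cr3 ?addr0 //; apply: cr3U_coprodA.
Qed.

End QuadraticMaps.

Theorem proposition2p10 (C : PCCat) (X Y : C) (A : zmodType)
  (phi : mor X Y -> A) (phi0 : phi (zmor X Y) = 0%R) :
  quadratic phi <->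
  factors_through (fun _ : FU X Y => True) (@ker_t2 C X Y) (phibar phi).
Proof.
exact: iff_trans (quadraticP phi0) (iff_sym (phibar_factors_t2P phi0)).
Qed.
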